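(* The matrices $A=\begin{pmatrix}1&2&1\\1&1&0\\1&0&1\end{pmatrix}$ and $B=\begin{pmatrix}1&0&1&0&1\\0&1&1&1&0\\1&1&1&0&0\\1&0&0&0&1\\0&1&0&1&0\end{pmatrix}$ are balanced strong shift equivalent (in particular strong shift equivalent and unitally shift equivalent).
   Context: A rectangular $\{0,1\}$-matrix $D$ is a division matrix if every row contains at least one $1$ and every column contains exactly one $1$. For square $\mathbb{N}$-matrices $A,B$ with no zero rows, $B$ is an outsplit of $A$ if there are a division matrix $D$ and an $\mathbb{N}$-matrix $E$ with $A=DE$ and $B=ED$. $A$ and $B$ are balanced elementary strong shift equivalent if there are a division matrix $D$ and rectangular $\mathbb{N}$-matrices $R_A,R_B$ with $A=D^tR_A$, $B=D^tR_B$ and $R_AD^t=R_BD^t$. Balanced strong shift equivalence is the equivalence relation generated by balanced elementary strong shift equivalence and outsplits. Two square $\mathbb{N}$-matrices are unitally shift equivalent if there are $\ell\ge1$ and rectangular $\mathbb{N}$-matrices $R,S$ with $A^\ell=RS$, $B^\ell=SR$, $AR=RB$, $BS=SA$, and $m,k\in\mathbb{N}$ with $(B^t)^mR^t\underline1=(B^t)^{m+k}\underline1$ ($\underline1$ the all-ones column vector). *)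

From mathcomp Require Import all_boot all_algebra.
From Stdlib Require Import Relations.
Set Implicit Arguments. Unset Strict Implicit. Unset Printing Implicit Defensive.
Import GRing.Theory.
Local Open Scope ring_scope.

Definition sqmx := {n : nat & 'M[nat]_n}.

Definition no_zero_row (n : nat) (A : 'M[nat]_n) : Prop :=
  forall i : 'I_n, exists j : 'I_n, A i j != 0%N.

Definition division_mx (m n : nat) (D : 'M[nat]_(m, n)) : Prop :=
  (forall i j, D i j = 0%N \/ D i j = 1%N) /\
  (forall i : 'I_m, exists j : 'I_n, D i j = 1%N) /\
  (forall j : 'I_n, exists i : 'I_m, D i j = 1%N /\
      forall i' : 'I_m, D i' j = 1%N -> i' = i).

Definition outsplit (X Y : sqmx) : Prop :=
  let (n, A) := X in let (m, B) := Y in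
  no_zero_row A /\ no_zero_row B /\
  exists (D : 'M[nat]_(n, m)) (E : 'M[nat]_(m, n)),
    division_mx D /\ A = D *m E /\ B = E *m D.

Definition balanced_elem_sse (X Y : sqmx) : Prop :=
  let (n, A) := X in let (m, B) := Y in
  no_zero_row A /\ no_zero_row B /\
  exists (e : m = n) (k : nat) (D : 'M[nat]_(k, n)) (RA RB : 'M[nat]_(k, n)),
    division_mx D /\ A = D^T *m RA /\ castmx (e, e) B = D^T *m RB /\
    RA *m D^T = RB *m D^T.

Definition bsse : relation sqmx :=
  clos_refl_sym_trans sqmx (fun X Y => balanced_elem_sse X Y \/ outsplit X Y).

Definition elem_sse (X Y : sqmx) : Prop :=
  let (n, A) := X in let (m, B) := Y in
  exists (R : 'M[nat]_(n, m)) (S : 'M[nat]_(m, n)), A = R *m S /\ B = S *m R.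

Definition sse : relation sqmx := clos_refl_sym_trans sqmx elem_sse.

Definition unital_se (X Y : sqmx) : Prop :=
  let (n, A) := X in let (m, B) := Y in
  exists (l : nat) (R : 'M[nat]_(n, m)) (S : 'M[nat]_(m, n)),
    (1 <= l)%N /\ A ^+ l = R *m S /\ B ^+ l = S *m R /\
    A *m R = R *m B /\ B *m S = S *m A /\
    exists p k : nat,
      (B^T) ^+ p *m R^T *m (const_mx 1 : 'cV[nat]_n)
      = (B^T) ^+ (p + k) *m (const_mx 1 : 'cV[nat]_m).

Definition matA : 'M[nat]_3 :=
  \matrix_(i < 3, j < 3)
    nth 0%N (nth [::] [:: [:: 1; 2; 1]; [:: 1; 1; 0]; [:: 1; 0; 1]]%N i) j.

Definition matB : 'M[nat]_5 :=
  \matrix_(i < 5, j < 5)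
    nth 0%N (nth [::]
      [:: [:: 1; 0; 1; 0; 1]; [:: 0; 1; 1; 1; 0]; [:: 1; 1; 1; 0; 0];
          [:: 1; 0; 0; 0; 1]; [:: 0; 1; 0; 1; 0]]%N i) j.

From mathcomp Require Import all_boot all_algebra.
From Stdlib Require Import Relations.
Set Implicit Arguments. Unset Strict Implicit. Unset Printing Implicit Defensive.
Import GRing.Theory.
Local Open Scope ring_scope.

(* The chain
     A --outsplit--> C4 --outsplit--> C6 ~~balanced~~ C6' <--outsplit-- B
   of explicit matrices shows that A and B are balanced strong shift
   equivalent.
   An outsplit A = DE, B = ED is an elementary strong shift equivalence, and a
   balanced step A = P QA, B = P QB with QA P = QB P factors through QA P.
   For unital shift equivalence, which is not obviously symmetric, every move
   of the chain is read from A towards B: an outsplit is a shift equivalence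
   of lag 1 in both directions (the unital condition holds because every
   column of D sums to 1), a balanced step is one of lag 2 with R = B and
   S = A, and shift equivalences compose together with their unital
   conditions. *)

Section MatrixPowers.

Variable R : pzSemiRingType.

Lemma mulmx_exprX_intertwine n m (A : 'M[R]_n) (B : 'M[R]_m) (X : 'M[R]_(n, m)) j :
  A *m X = X *m B -> A ^+ j *m X = X *m B ^+ j.
Proof.
move=> AX; elim: j => [|j IHj]; first by rewrite !expr0 mul1mx mulmx1.
by rewrite !exprS -!mulmxE -mulmxA IHj !mulmxA AX.
Qed.

Lemma mulmx_exprC n (A : 'M[R]_n) i j : A ^+ i *m A ^+ j = A ^+ j *m A ^+ i.
Proof. by rewrite mulmxE -!exprD addnC. Qed.

Lemma exprD_mulmx n (A : 'M[R]_n) i j : A ^+ (i + j) = A ^+ i *m A ^+ j.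
Proof. by rewrite exprD mulmxE. Qed.

(* How the unital condition composes; [B], [C], [X], [Y] stand for transposes. *)
Lemma unital_condition_comp n m p (B : 'M[R]_m) (C : 'M[R]_p)
    (X : 'M[R]_(m, n)) (Y : 'M[R]_(p, m)) (u : 'cV[R]_n) (v : 'cV[R]_m) (w : 'cV[R]_p)
    p1 k1 p2 k2 :
  C *m Y = Y *m B ->
  B ^+ p1 *m X *m u = B ^+ (p1 + k1) *m v ->
  C ^+ p2 *m Y *m v = C ^+ (p2 + k2) *m w ->
  C ^+ (p1 + p2) *m (Y *m X) *m u = C ^+ (p1 + p2 + (k1 + k2)) *m w.
Proof.
move=> CY Xu Yv; have CjY j := mulmx_exprX_intertwine j CY.
rewrite addnC exprD_mulmx !mulmxA -(mulmxA (C ^+ p2)) CjY.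
rewrite -!mulmxA (mulmxA (B ^+ p1)) Xu !mulmxA -(mulmxA (C ^+ p2)) -CjY.
rewrite mulmxA mulmx_exprC -!mulmxA (mulmxA (C ^+ p2)) Yv mulmxA -exprD_mulmx.
by congr (C ^+ _ *m _); rewrite addnACA (addnC p2).
Qed.

End MatrixPowers.

Lemma trmx_mul_const1E m n (D : 'M[nat]_(m, n)) j k :
  (D^T *m (const_mx 1 : 'cV_m)) j k = \sum_i D i j.
Proof. by rewrite !mxE; apply: eq_bigr => i _; rewrite !mxE mulr1. Qed.

Lemma division_mxE m n (D : 'M[nat]_(m, n)) :
  division_mx D <->
  (forall i, exists j, D i j != 0%N) /\ D^T *m (const_mx 1 : 'cV_m) = const_mx 1.
Proof.
split.
- case=> [D01 [rowD colD]]; split=> [i|].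
    by have [j Dij] := rowD i; exists j; rewrite Dij.
  apply/matrixP=> j k; rewrite trmx_mul_const1E mxE.
  have [i [Dij uniq_i]] := colD j.
  rewrite (bigD1 i) //= Dij big1 // => i' ne_i'i.
  by case: (D01 i' j) => // /uniq_i/eqP; rewrite (negbTE ne_i'i).
- case=> rowD colD.
  have colsum j : \sum_i D i j = 1%N.
    by move/matrixP/(_ j ord0): colD; rewrite trmx_mul_const1E mxE.
  have le1 i j : (D i j <= 1)%N by rewrite -(colsum j) (bigD1 i) //= leq_addr.
  have eq1 i j : D i j != 0%N -> D i j = 1%N.
    by move=> nz; apply/eqP; rewrite eqn_leq le1 lt0n.
  split; [|split].
  + by move=> i j; case: (D i j) (le1 i j) => [|[|]]; [left|right|].
  + by move=> i; have [j /eq1] := rowD i; exists j.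
  + move=> j; have [i nzij] : exists i, D i j != 0%N.
      apply/existsP; apply: contraT; rewrite negb_exists => /forallP D0.
      by have := colsum j; rewrite big1 // => i _; apply/eqP/negbNE/D0.
    exists i; split=> [|i' Di'j]; first exact: eq1.
    apply/eqP; apply: contraT => ne_i'i; have := colsum j.
    by rewrite (bigD1 i) //= (bigD1 i' ne_i'i) //= (eq1 _ _ nzij) Di'j => /eqP.
Qed.

Lemma outsplit_elem_sse X Y : outsplit X Y -> elem_sse X Y.
Proof. by case: X Y => [n A] [m B] [_ [_ [D [E [_ [-> ->]]]]]]; exists D, E. Qed.

Lemma common_factor_sse n k (P : 'M[nat]_(n, k)) (QA QB : 'M[nat]_(k, n)) :
  QA *m P = QB *m P -> sse (existT _ n (P *m QA)) (existT _ n (P *m QB)).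
Proof.
move=> QP; apply: (rst_trans _ _ _ (existT _ k (QA *m P))).
  by apply: rst_step; exists P, QA.
by apply: rst_sym; apply: rst_step; exists P, QB; rewrite QP.
Qed.

Lemma balanced_elem_sse_sse X Y : balanced_elem_sse X Y -> sse X Y.
Proof.
case: X Y => [n A] [m B] [_ [_ [e [k [D [RA [RB [_ [-> [eB QD]]]]]]]]]].
by subst m; rewrite castmx_id in eB; rewrite eB; exact: common_factor_sse.
Qed.

Lemma bsse_sse X Y : bsse X Y -> sse X Y.
Proof.
elim=> {X Y} [X Y [XY|XY] | X | X Y _ YX | X Y Z _ XY _ YZ].
- exact: balanced_elem_sse_sse.
- exact/rst_step/outsplit_elem_sse.
- exact: rst_refl.
- exact: rst_sym.
- exact: rst_trans XY YZ.
Qed.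

Lemma unital_se_trans n m p (A : 'M[nat]_n) (B : 'M[nat]_m) (C : 'M[nat]_p) :
  unital_se (existT _ n A) (existT _ m B) ->
  unital_se (existT _ m B) (existT _ p C) ->
  unital_se (existT _ n A) (existT _ p C).
Proof.
move=> [l1 [R1 [S1 [l1_gt0 [AR1S1 [BS1R1 [AR1 [BS1 [p1 [k1 unit1]]]]]]]]]].
move=> [l2 [R2 [S2 [l2_gt0 [BR2S2 [CS2R2 [BR2 [CS2 [p2 [k2 unit2]]]]]]]]]].
exists (l1 + l2)%N, (R1 *m R2), (S2 *m S1); split; first by rewrite addn_gt0 l1_gt0.
split.
  have -> : R1 *m R2 *m (S2 *m S1) = R1 *m (B ^+ l2 *m S1) by rewrite BR2S2 !mulmxA.
  by rewrite (mulmx_exprX_intertwine _ BS1) mulmxA -AR1S1 -exprD_mulmx.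
split.
  have -> : S2 *m S1 *m (R1 *m R2) = S2 *m (B ^+ l1 *m R2) by rewrite BS1R1 !mulmxA.
  by rewrite (mulmx_exprX_intertwine _ BR2) mulmxA -CS2R2 -exprD_mulmx addnC.
split; first by rewrite mulmxA AR1 -!mulmxA BR2.
split; first by rewrite mulmxA CS2 -!mulmxA BS1.
exists (p1 + p2)%N, (k1 + k2)%N; rewrite trmx_mul.
apply: unital_condition_comp unit1 unit2.
by rewrite -!trmx_mul BR2.
Qed.

Lemma outsplit_unital_se X Y : outsplit X Y -> unital_se X Y.
Proof.
case: X Y => [n A] [m B] [_ [_ [D [E [/division_mxE[_ colD] [-> ->]]]]]].
exists 1%N, D, E; rewrite !expr1 !mulmxA; do 5!split=> //.
by exists 0%N, 0%N; rewrite expr0 !mul1mx.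
Qed.

Lemma outsplit_unital_se_rev X Y : outsplit X Y -> unital_se Y X.
Proof.
case: X Y => [n A] [m B] [_ [_ [D [E [/division_mxE[_ colD] [-> ->]]]]]].
exists 1%N, E, D; rewrite !expr1 !mulmxA; do 5!split=> //.
by exists 0%N, 1%N; rewrite expr0 mul1mx expr1 trmx_mul -mulmxA colD.
Qed.

Lemma common_factor_unital_se n k (P : 'M[nat]_(n, k)) (QA QB : 'M[nat]_(k, n)) :
  QA *m P = QB *m P ->
  unital_se (existT _ n (P *m QA)) (existT _ n (P *m QB)).
Proof.
move=> QP; have swap (Z : 'M[nat]_(k, n)) : P *m QA *m (P *m Z) = P *m QB *m (P *m Z).
  by rewrite !mulmxA -(mulmxA P QA) QP mulmxA.
exists 2%N, (P *m QB), (P *m QA); rewrite !expr2 -!mulmxE.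
do 5!split=> //; rewrite ?swap //.
by exists 0%N, 1%N; rewrite expr0 mul1mx expr1.
Qed.

Lemma balanced_elem_sse_unital_se X Y : balanced_elem_sse X Y -> unital_se X Y.
Proof.
case: X Y => [n A] [m B] [_ [_ [e [k [D [RA [RB [_ [-> [eB QD]]]]]]]]]].
by subst m; rewrite castmx_id in eB; rewrite eB; exact: common_factor_unital_se.
Qed.

(* Matrices written as lists of rows: the matrix library's operations are
   locked, whereas products and transposes of lists reduce by computation. *)
Section SeqMatrices.

Implicit Types s t : seq (seq nat).

Definition seq_entry s i j := nth 0%N (nth [::] s i) j.

Definition mx_of_seq m n s : 'M[nat]_(m, n) := \matrix_(i < m, j < n) seq_entry s i j.

Lemma mx_of_seqE m n s i j : mx_of_seq m n s i j = seq_entry s i j.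
Proof. exact: mxE. Qed.

Definition seq_mul m n p s t :=
  [seq [seq sumn [seq seq_entry s i k * seq_entry t k j | k <- iota 0 n]
       | j <- iota 0 p] | i <- iota 0 m].

Definition seq_tr m n s := [seq [seq seq_entry s i j | i <- iota 0 m] | j <- iota 0 n].

Lemma seq_entry_map m n (F : nat -> nat -> nat) (i : 'I_m) (j : 'I_n) :
  seq_entry [seq [seq F i' j' | j' <- iota 0 n] | i' <- iota 0 m] i j = F i j.
Proof.
by rewrite /seq_entry (nth_map 0%N) ?size_iota // (nth_map 0%N) ?size_iota // !nth_iota.
Qed.

Lemma mx_of_seq_mul m n p s t :
  mx_of_seq m n s *m mx_of_seq n p t = mx_of_seq m p (seq_mul m n p s t).
Proof.
apply/matrixP=> i j; rewrite !mxE seq_entry_map sumnE big_map.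
under [LHS]eq_bigr do rewrite !mx_of_seqE.
by rewrite -(big_mkord xpredT (fun k => seq_entry s i k * seq_entry t k j)) /index_iota subn0.
Qed.

Lemma mx_of_seq_tr m n s : (mx_of_seq m n s)^T = mx_of_seq n m (seq_tr m n s).
Proof. by apply/matrixP=> j i; rewrite mxE !mx_of_seqE seq_entry_map. Qed.

Lemma const_mx1_seq m : (const_mx 1 : 'cV[nat]_m) = mx_of_seq m 1 (nseq m [:: 1%N]).
Proof. by apply/matrixP=> i j; rewrite mxE mx_of_seqE /seq_entry nth_nseq ltn_ord ord1. Qed.

Definition seq_rows_nonzero m n s :=
  all (fun i => has (fun j => seq_entry s i j != 0%N) (iota 0 n)) (iota 0 m).

Lemma mx_of_seq_rows_nonzero m n s : seq_rows_nonzero m n s ->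
  forall i : 'I_m, exists j : 'I_n, mx_of_seq m n s i j != 0%N.
Proof.
move=> /allP rows i; have /hasP[j] : has (fun j => seq_entry s i j != 0%N) (iota 0 n).
  by apply: rows; rewrite mem_iota add0n ltn_ord.
rewrite mem_iota /= => lt_jn nz_ij.
by exists (Ordinal lt_jn); rewrite mx_of_seqE.
Qed.

Definition seq_division m n s :=
  seq_rows_nonzero m n s &&
  (seq_mul n m 1 (seq_tr m n s) (nseq m [:: 1%N]) == nseq n [:: 1%N]).

Lemma mx_of_seq_division m n s : seq_division m n s -> division_mx (mx_of_seq m n s).
Proof.
case/andP=> rows /eqP colsum; apply/division_mxE; split.
  exact: mx_of_seq_rows_nonzero.
by rewrite !const_mx1_seq mx_of_seq_tr mx_of_seq_mul colsum.
Qed.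

End SeqMatrices.

Definition sqmx_of_seq n (s : seq (seq nat)) : sqmx := existT _ n (mx_of_seq n n s).

Lemma outsplit_of_seq n m sA sB sD sE :
  [&& seq_rows_nonzero n n sA, seq_rows_nonzero m m sB & seq_division n m sD] ->
  (seq_mul n m n sD sE == sA) && (seq_mul m n m sE sD == sB) ->
  outsplit (sqmx_of_seq n sA) (sqmx_of_seq m sB).
Proof.
case/and3P=> rowsA rowsB divD /andP[/eqP DE /eqP ED].
split; [exact: mx_of_seq_rows_nonzero | split; first exact: mx_of_seq_rows_nonzero].
exists (mx_of_seq n m sD), (mx_of_seq m n sE).
by rewrite !mx_of_seq_mul DE ED; split=> //; exact: mx_of_seq_division.
Qed.

Lemma balanced_elem_sse_of_seq n k sA sB sD sRA sRB :
  [&& seq_rows_nonzero n n sA, seq_rows_nonzero n n sB & seq_division k n sD] ->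
  [&& seq_mul n k n (seq_tr k n sD) sRA == sA, seq_mul n k n (seq_tr k n sD) sRB == sB
    & seq_mul k n k sRA (seq_tr k n sD) == seq_mul k n k sRB (seq_tr k n sD)] ->
  balanced_elem_sse (sqmx_of_seq n sA) (sqmx_of_seq n sB).
Proof.
case/and3P=> rowsA rowsB divD /and3P[/eqP DA /eqP DB /eqP RD].
split; [exact: mx_of_seq_rows_nonzero | split; first exact: mx_of_seq_rows_nonzero].
exists erefl, k, (mx_of_seq k n sD), (mx_of_seq k n sRA), (mx_of_seq k n sRB).
rewrite castmx_id !mx_of_seq_tr !mx_of_seq_mul DA DB RD.
by split=> //; exact: mx_of_seq_division.
Qed.

Definition seqA : seq (seq nat) := [:: [:: 1; 2; 1]; [:: 1; 1; 0]; [:: 1; 0; 1]]%N.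

Definition seqB : seq (seq nat) :=
  [:: [:: 1; 0; 1; 0; 1]; [:: 0; 1; 1; 1; 0]; [:: 1; 1; 1; 0; 0];
      [:: 1; 0; 0; 0; 1]; [:: 0; 1; 0; 1; 0]]%N.

Definition seqC4 : seq (seq nat) :=
  [:: [:: 0; 0; 1; 0]; [:: 1; 1; 1; 1]; [:: 1; 1; 1; 0]; [:: 1; 1; 0; 1]]%N.

Definition seqC6 : seq (seq nat) :=
  [:: [:: 0; 0; 0; 1; 0; 0]; [:: 0; 1; 1; 1; 0; 0]; [:: 1; 0; 0; 0; 1; 1];
      [:: 1; 1; 1; 1; 0; 0]; [:: 0; 1; 1; 0; 0; 0]; [:: 1; 0; 0; 0; 1; 1]]%N.

Definition seqC6' : seq (seq nat) :=
  [:: [:: 0; 0; 0; 1; 0; 0]; [:: 0; 1; 0; 1; 0; 1]; [:: 1; 0; 1; 0; 1; 0];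
      [:: 1; 1; 1; 1; 0; 0]; [:: 0; 1; 0; 0; 0; 1]; [:: 1; 0; 1; 0; 1; 0]]%N.

Lemma outsplit_A_C4 : outsplit (sqmx_of_seq 3 seqA) (sqmx_of_seq 4 seqC4).
Proof.
by apply: (@outsplit_of_seq _ _ _ _
  [:: [:: 1; 1; 0; 0]; [:: 0; 0; 1; 0]; [:: 0; 0; 0; 1]]%N
  [:: [:: 0; 1; 0]; [:: 1; 1; 1]; [:: 1; 1; 0]; [:: 1; 0; 1]]%N).
Qed.

Lemma outsplit_C4_C6 : outsplit (sqmx_of_seq 4 seqC4) (sqmx_of_seq 6 seqC6).
Proof.
by apply: (@outsplit_of_seq _ _ _ _
  [:: [:: 1; 0; 0; 0; 0; 0]; [:: 0; 1; 1; 0; 0; 0];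
      [:: 0; 0; 0; 1; 0; 0]; [:: 0; 0; 0; 0; 1; 1]]%N
  [:: [:: 0; 0; 1; 0]; [:: 0; 1; 1; 0]; [:: 1; 0; 0; 1];
      [:: 1; 1; 1; 0]; [:: 0; 1; 0; 0]; [:: 1; 0; 0; 1]]%N).
Qed.

Lemma balanced_C6_C6' : balanced_elem_sse (sqmx_of_seq 6 seqC6) (sqmx_of_seq 6 seqC6').
Proof.
by apply: (@balanced_elem_sse_of_seq _ 5 _ _
  [:: [:: 1; 0; 0; 0; 0; 0]; [:: 0; 1; 0; 0; 0; 0]; [:: 0; 0; 1; 0; 0; 1];
      [:: 0; 0; 0; 1; 0; 0]; [:: 0; 0; 0; 0; 1; 0]]%N
  [:: [:: 0; 0; 0; 1; 0; 0]; [:: 0; 1; 1; 1; 0; 0]; [:: 1; 0; 0; 0; 1; 1];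
      [:: 1; 1; 1; 1; 0; 0]; [:: 0; 1; 1; 0; 0; 0]]%N
  [:: [:: 0; 0; 0; 1; 0; 0]; [:: 0; 1; 0; 1; 0; 1]; [:: 1; 0; 1; 0; 1; 0];
      [:: 1; 1; 1; 1; 0; 0]; [:: 0; 1; 0; 0; 0; 1]]%N).
Qed.

Lemma outsplit_B_C6' : outsplit (sqmx_of_seq 5 seqB) (sqmx_of_seq 6 seqC6').
Proof.
by apply: (@outsplit_of_seq _ _ _ _
  [:: [:: 1; 0; 1; 0; 0; 0]; [:: 0; 1; 0; 0; 0; 0]; [:: 0; 0; 0; 1; 0; 0];
      [:: 0; 0; 0; 0; 0; 1]; [:: 0; 0; 0; 0; 1; 0]]%N
  [:: [:: 0; 0; 1; 0; 0]; [:: 0; 1; 1; 1; 0]; [:: 1; 0; 0; 0; 1];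
      [:: 1; 1; 1; 0; 0]; [:: 0; 1; 0; 1; 0]; [:: 1; 0; 0; 0; 1]]%N).
Qed.

Theorem mainTheorem12 :
  bsse (existT _ 3 matA) (existT _ 5 matB) /\
  sse (existT _ 3 matA) (existT _ 5 matB) /\
  unital_se (existT _ 3 matA) (existT _ 5 matB).
Proof.
have -> : existT _ 3 matA = sqmx_of_seq 3 seqA by [].
have -> : existT _ 5 matB = sqmx_of_seq 5 seqB by [].
have bsseAB : bsse (sqmx_of_seq 3 seqA) (sqmx_of_seq 5 seqB).
  apply: (rst_trans _ _ _ (sqmx_of_seq 4 seqC4)).
    by apply: rst_step; right; exact: outsplit_A_C4.
  apply: (rst_trans _ _ _ (sqmx_of_seq 6 seqC6)).
    by apply: rst_step; right; exact: outsplit_C4_C6.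
  apply: (rst_trans _ _ _ (sqmx_of_seq 6 seqC6')).
    by apply: rst_step; left; exact: balanced_C6_C6'.
  by apply: rst_sym; apply: rst_step; right; exact: outsplit_B_C6'.
split; [exact: bsseAB | split; first exact: bsse_sse].
apply: unital_se_trans (outsplit_unital_se outsplit_A_C4) _.
apply: unital_se_trans (outsplit_unital_se outsplit_C4_C6) _.
apply: unital_se_trans (balanced_elem_sse_unital_se balanced_C6_C6') _.
exact: outsplit_unital_se_rev outsplit_B_C6'.
Qed.
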